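(* Let $K$ be an algebraically closed field of characteristic zero, $\mathcal{K} = K(t)$, and fix integers $d \ge 2$ and $N \ge 1$. Then $0$ does not realize portrait $(1,N)$ for $f_d(z) = z^d+t$.
   Context: For $c \in K$, let $f_{d,c}(z) = z^d+c$. A point $x$ has preperiodic portrait $(M,N)$ for $\phi$ if $M\ge0$ is minimal with $\phi^M(x)$ periodic and $\phi^M(x)$ has exact period $N$. We say $\alpha\in\mathcal{K}$ realizes portrait $(M,N)$ for $f_d$ if there exists $c \in K$ such that $\alpha(c)$ (reduction modulo the place $t=c$) has portrait $(M,N)$ for $f_{d,c}$. *)

From HB Require Import structures.
From mathcomp Require Import all_boot all_order all_algebra.
Set Implicit Arguments. Unset Strict Implicit. Unset Printing Implicit Defensive.
Import Order.TTheory GRing.Theory Num.Theory.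
Local Open Scope ring_scope.

Definition fdc (K : nzRingType) (d : nat) (c : K) (z : K) : K := z ^+ d + c.

Definition is_periodic (T : Type) (phi : T -> T) (x : T) : Prop :=
  exists n : nat, (0 < n)%N /\ iter n phi x = x.

Definition exact_period (T : Type) (phi : T -> T) (x : T) (N : nat) : Prop :=
  (0 < N)%N /\ iter N phi x = x /\
  forall k : nat, (0 < k)%N -> (k < N)%N -> iter k phi x <> x.

Definition has_portrait (T : Type) (phi : T -> T) (x : T) (M N : nat) : Prop :=
  is_periodic phi (iter M phi x) /\
  (forall m : nat, (m < M)%N -> ~ is_periodic phi (iter m phi x)) /\
  exact_period phi (iter M phi x) N.

(* Reduction of alpha in K(t) modulo the place t = c: alpha = p/q with
   q(c) <> 0, reduced value p(c)/q(c). *)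
Definition reduces_to (K : fieldType) (alpha : {fraction {poly K}}) (c v : K) : Prop :=
  exists p q : {poly K}, q.[c] != 0 /\ alpha = FracField.tofrac p / FracField.tofrac q /\ v = p.[c] / q.[c].

Definition realizes (K : fieldType) (d : nat) (alpha : {fraction {poly K}}) (M N : nat) : Prop :=
  exists c v : K, reduces_to alpha c v /\ has_portrait (fdc d c) v M N.

(* The point 0 of K(t) reduces to 0 at every place, so a portrait (1, N)
   would make c = f_{d,c}(0) periodic while 0 itself is not.  But 0 is the
   only preimage of c under z |-> z^d + c, and a point whose image is periodic
   and which is the unique preimage of that image lies on the cycle itself.
   Neither the characteristic nor algebraic closedness of K plays a role. *)
From HB Require Import structures.
From mathcomp Require Import all_boot all_order all_algebra.
From mathcomp Require Import fraction.
Import GRing.Theory.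
Local Open Scope ring_scope.

Lemma reduces_to_zero (K : fieldType) (c v : K) :
  reduces_to (0 : {fraction {poly K}}) c v -> v = 0.
Proof.
move=> [p [q [qc_neq0 [alpha0 ->]]]].
have q_neq0 : q != 0 by apply: contraNneq qc_neq0 => ->; rewrite horner0.
have : FracField.tofrac p = 0.
  have tq_neq0 : FracField.tofrac q != 0 by rewrite tofrac_eq0.
  by move/eqP: alpha0; rewrite eq_sym mulf_eq0 invr_eq0 (negPf tq_neq0) orbF => /eqP.
by move/eqP; rewrite tofrac_eq0 => /eqP ->; rewrite horner0 mul0r.
Qed.

Lemma periodic_of_periodic_image (T : Type) (phi : T -> T) (x : T) :
  (forall y, phi y = phi x -> y = x) ->
  is_periodic phi (phi x) -> is_periodic phi x.
Proof.
move=> phi_inj_at_x [[|n] [n_gt0 //]].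
rewrite iterS => /phi_inj_at_x per_x.
by exists n.+1; rewrite iterSr.
Qed.

Lemma fdc_eq_at0 (K : idomainType) (d : nat) (c z : K) :
  (0 < d)%N -> fdc d c z = fdc d c 0 -> z = 0.
Proof.
move=> d_gt0 /eqP; rewrite /fdc expr0n eqn0Ngt d_gt0 add0r -subr_eq0 addrK.
by rewrite expf_eq0 => /andP[_ /eqP].
Qed.

Theorem corollary3p5 (K : closedFieldType) (hK : [pchar K] =i pred0)
  (d N : nat) (hd : (2 <= d)%N) (hN : (1 <= N)%N) :
  ~ realizes d (0 : {fraction {poly K}}) 1 N.
Proof.
move=> [c [v [/reduces_to_zero -> [per_c [not_per_0 _]]]]].
apply: (not_per_0 0%N) => //; apply: periodic_of_periodic_image per_c => y.
by apply: fdc_eq_at0; apply: ltn_trans hd.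
Qed.
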